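(* Let $\widehat G$ be a signed ribbon graph with underlying oriented ribbon graph $G$ and let $\widetilde L=\widetilde L_{\widehat G}$ be the diagram of the signed medial link $L_{\widehat G}\subset G\times I$ (as defined in the context). Then $$\langle \widetilde L\rangle(A,B,d)\;=\;A^{r(G)}\,B^{n(G)}\,d^{k(G)-1}\,R_{\widehat G}\!\left(\frac{Bd}{A},\,\frac{Ad}{B},\,\frac{1}{d}\right).$$
   Context: A ribbon graph $G$ is a graph $\Gamma=(V,E)$ (loops and multiple edges allowed) with a fixed cyclic order of edge-ends at each vertex; equivalently a compact surface with boundary that is a union of closed vertex discs and edge ribbons meeting in disjoint line segments, each segment on the boundary of exactly one vertex disc and one edge ribbon, each ribbon containing exactly two segments. The surface $G$ is oriented (counterclockwise rotation). For a ribbon graph $F$: $v(F),e(F),k(F)$ are the numbers of vertices, edges, connected components; $r(F)=v(F)-k(F)$, $n(F)=e(F)-r(F)$; $\mathrm{bc}(F)$ is the number of boundary components of the surface $F$. A spanning subgraph contains all vertices and a subset of edges; $\mathcal F(G)$ is the set of them; $\overline F=G-F$ is the complementary spanning subgraph (edges of $G$ not in $F$). A signed ribbon graph $\widehat G$ is $G$ with a sign function $\varepsilon:E\to\{\pm1\}$; $e_-(F)$ is the number of edges of $F$ with sign $-1$, and $s(F)=\tfrac12\bigl(e_-(F)-e_-(\overline F)\bigr)$. The signed Bollobás–Riordan polynomial is $$R_{\widehat G}(x,y,z)=\sum_{F\in\mathcal F(G)}x^{r(G)-r(F)+s(F)}\,y^{n(F)-s(F)}\,z^{k(F)-\mathrm{bc}(F)+n(F)}.$$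 Diagrams and Kauffman bracket: for a link in $G\times I$ ($I=[0,1]$) in general position w.r.t. projection to $G$, a diagram is its projected immersed curve with over/under information at finitely many double points. At a crossing the $A$-splitting joins the two local regions swept by the overcrossing arc rotated according to the orientation of $G$ until it reaches the undercrossing arc; the $B$-splitting joins the other two. A state $S$ chooses a splitting at each crossing; $\alpha(S),\beta(S)$ count $A$- and $B$-splittings, $\delta(S)$ counts components of the resulting curve. $\langle\widetilde L\rangle(A,B,d)=\sum_S A^{\alpha(S)}B^{\beta(S)}d^{\delta(S)-1}$. Medial links: the medial graph $H_G$ in $G$ has one 4-valent vertex at the middle of each edge ribbon, its edges running along the ribbons and turning at vertex discs to the next ribbon in the cyclic order. Regions of $G\setminus H_G$ containing a vertex of $\Gamma$ are black, others white. The natural diagram $\widetilde L_G$ makes each vertex of $H_G$ a crossing so that the overcrossing branch, rotated according to the orientation of $G$ until the undercrossing branch, sweeps out the black regions. The signed medial link diagram $\widetilde L_{\widehat G}$ is obtained from $\widetilde L_G$ by switching overcrossing and undercrossing at the crossings corresponding to negative edges. *)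

From HB Require Import structures.
From mathcomp Require Import all_boot all_order all_algebra all_fingroup.



Unset Printing Implicit Defensive.

Import GRing.Theory Num.Theory.
Local Open Scope ring_scope.

(* An oriented ribbon graph, combinatorially: vertices V, edges E, darts
   (half-edges) D; [vert d] is the vertex of dart d, [edge d] its edge,
   [alpha] swaps the two darts of an edge, and [sigma] is the counterclockwise
   cyclic order of dart-ends around each vertex. Isolated vertices are allowed
   (vertices with no darts). *)
Record ribbon := RGraph {
  rV : finType; rE : finType; rD : finType;
  vert : rD -> rV; edge : rD -> rE;
  sigma : {perm rD}; alpha : {perm rD} }.

Definition is_ribbon_graph (G : ribbon) : Prop :=
  (forall d, alpha G (alpha G d) = d) /\
  (forall d, alpha G d != d) /\
  (forall d, edge G (alpha G d) = edge G d) /\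
  (forall d d', edge G d = edge G d' -> d' = d \/ d' = alpha G d) /\
  (forall e, exists d, edge G d = e) /\
  (forall d, vert G (sigma G d) = vert G d) /\
  (forall d d', vert G d = vert G d' -> exists k, (sigma G ^+ k)%g d = d').

Section RibbonDefs.
Variable G : ribbon.
Local Notation V := (rV G).
Local Notation E := (rE G).
Local Notation D := (rD G).
Local Notation vert := (vert G).
Local Notation edge := (edge G).
Local Notation sigma := (sigma G).
Local Notation alpha := (alpha G).

Definition adjF (F : {set E}) : rel V := fun u w =>
  [exists d : D, [&& edge d \in F, vert d == u & vert (alpha d) == w]].

Definition kc (F : {set E}) : nat := n_comp (adjF F) predT.
Definition rk (F : {set E}) : int := (#|V|%:Z - (kc F)%:Z)%R.
Definition nul (F : {set E}) : int := (#|F|%:Z - rk F)%R.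

Definition nextF (F : {set E}) (d : D) : D :=
  let s := [seq (sigma ^+ i.+1)%g d | i <- iota 0 #|D|] in
  nth d s (find (fun x => edge x \in F) s).

(* boundary walk (face permutation) of the ribbon subgraph F *)
Definition faceF (F : {set E}) (d : D) : D := nextF F (alpha d).

(* bc(F): boundary components of the surface F = cycles of the face
   permutation on the darts of F, plus one boundary circle for each vertex
   disc carrying no edge of F *)
Definition bc (F : {set E}) : nat :=
  (#|[set froot (faceF F) d | d in [set d : D | edge d \in F]]|
   + #|[set v : V | [forall d : D, (vert d == v) ==> (edge d \notin F)]]|)%N.

Variable eps : E -> int.

Definition eminus (F : {set E}) : nat := #|[set e in F | eps e == -1]|.
Definition twice_s (F : {set E}) : int := ((eminus F)%:Z - (eminus (~: F))%:Z)%R.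

(* Signed Bollobas--Riordan polynomial, evaluated at x^(1/2) = xh,
   y^(1/2) = yh, z = z (exponents of x, y may be half-integers):
   x^(r(G)-r(F)+s(F)) = xh^(2(r(G)-r(F)) + 2s(F)),  y^(n(F)-s(F)) = yh^(2n(F)-2s(F)). *)
Definition BR_half (K : fieldType) (xh yh z : K) : K :=
  \sum_(F : {set E})
     xh ^ (2 * (rk setT - rk F) + twice_s F)%R
   * yh ^ (2 * nul F - twice_s F)%R
   * z ^ ((kc F)%:Z - (bc F)%:Z + nul F)%R.

(* ---- the signed medial link diagram ----
   Medial graph: one crossing per edge, one medial edge per corner
   c_d = (d, sigma d) of a vertex.  The four arms at the crossing of edge e
   are the ends of medial edges there: for each dart d of e the arm (d,true)
   = end of corner c_d, and the arm (d,false) = end of corner c_(sigma^-1 d). *)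
Definition arm := (D * bool)%type.

Definition med (a : arm) : arm :=
  if a.2 then (sigma a.1, false) else ((sigma^-1)%g a.1, true).

(* counterclockwise successor / predecessor of an arm around its crossing:
   ccw order (h,false), (alpha h,true), (alpha h,false), (h,true) *)
Definition succ_arm (a : arm) : arm :=
  if a.2 then (a.1, false) else (alpha a.1, true).
Definition pred_arm (a : arm) : arm :=
  if a.2 then (alpha a.1, false) else (a.1, true).

(* the local region between arm a and its ccw successor is black (contains
   the vertex disc of vert a.1) iff a.2; otherwise it is white *)
Definition black_after (a : arm) : bool := a.2.

(* overcrossing arms: in the natural diagram, the overcrossing strand is the
   pair of opposite arms whose ccw rotation sweeps the black regions; the
   crossing is switched at negative edges *)
Definition natural_over (a : arm) : bool := black_after a.
Definition signed_over (a : arm) : bool :=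
  if eps (edge a.1) == -1 then ~~ natural_over a else natural_over a.
Definition over_rep (b : arm) : arm :=
  if signed_over (b.1, true) then (b.1, true) else (b.1, false).

(* splitting of a crossing joining the two (opposite) regions following arms
   a and succ(succ a): resulting pairing of the four arms *)
Definition join_regions (a b : arm) : arm :=
  if (b == a) || (b == succ_arm (succ_arm a)) then pred_arm b else succ_arm b.

(* state S : E -> bool, true = A-splitting.  The A-splitting joins the regions
   swept by the overcrossing arc rotated ccw, the B-splitting the other two. *)
Definition state_pair (S : {ffun E -> bool}) (b : arm) : arm :=
  let o := over_rep b in
  if S (edge b.1) then join_regions o b else join_regions (succ_arm o) b.

(* delta(S): components of the resolved curve = components of the graph on
   arms formed by medial edges and the state pairings, plus one trivial
   circle (the medial curve) around each isolated vertex *)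
Definition delta (S : {ffun E -> bool}) : nat :=
  (n_comp (fun a b : arm => (b == med a) || (b == state_pair S a)) predT
   + #|[set v : V | [forall d : D, vert d != v]]|)%N.

Definition kbracket (K : fieldType) (A B d : K) : K :=
  \sum_(S : {ffun E -> bool})
     A ^+ #|[set e | S e]| * B ^+ #|[set e | ~~ S e]| * d ^ ((delta S)%:Z - 1)%R.

End RibbonDefs.

From mathcomp Require Import all_boot all_order all_algebra all_fingroup.
From mathcomp Require Import zify ring.
Import GRing.Theory.

(* Let F_S be the spanning subgraph of the positive edges carrying an
   A-splitting and the negative edges carrying a B-splitting.  At an edge of
   F_S the splitting runs along both sides of its ribbon, at any other edge
   it cuts across, so the resolved curve is the boundary of the surface F_S
   and delta(S) = bc(F_S).  Combinatorially the resolved curve is traced by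
   the permutation s_F o sigma of the darts, where s_F swaps the two darts of
   each edge of F: its cycles through vertices incident to F follow the
   boundary walks (faces) of F, and the remaining ones circle the vertex
   discs carrying no edge of F.  The monomials then match after counting the
   A-splittings as |F| - e_-(F) + e_-(G - F) and substituting x = Bd/A,
   y = Ad/B, z = 1/d. *)

Lemma card_imset_root (T : finType) (e : rel T) (a : {pred T}) :
  connect_sym e -> closed e a -> #|[set fingraph.root e x | x in a]| = n_comp e a.
Proof.
move=> sym_e cl_a; apply: eq_card => x; rewrite !inE.
apply/imsetP/andP => [[y a_y ->] | [/eqP rx a_x]]; last by exists x.
by split; [exact: roots_root | rewrite -(closed_connect cl_a (connect_root e y))].
Qed.

Lemma fconnect_iterP (T : finType) (f : T -> T) x y :
  reflect (exists n, iter n f x = y) (fconnect f x y).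
Proof.
apply: (iffP idP) => [xy | [n <-]]; last exact: fconnect_iter.
by exists (findex f x y); apply: iter_findex.
Qed.

Lemma eq_froot_in (T : finType) (f f' : T -> T) (a : {pred T}) :
  {in a, f =1 f'} -> {homo f : x / x \in a} -> {in a, froot f =1 froot f'}.
Proof.
move=> eq_ff' f_a x a_x.
have iter_ff' n : iter n f x = iter n f' x /\ iter n f x \in a.
  elim: n => [|n [IHeq IHa]] //=; rewrite -IHeq eq_ff' //; split=> //.
  by rewrite -eq_ff' // f_a.
rewrite /fingraph.root; congr odflt; apply: eq_pick => y /=.
apply/fconnect_iterP/fconnect_iterP => [] [n <-]; exists n; by case: (iter_ff' n).
Qed.

Section Boundary.
Variable G : ribbon.
Local Notation D := (rD G).
Local Notation V := (rV G).
Local Notation sg := (sigma G).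
Local Notation al := (alpha G).
Local Notation vt := (vert G).
Local Notation ed := (edge G).
Hypothesis alphaK : involutive al.
Hypothesis edge_alpha : forall x, ed (al x) = ed x.
Hypothesis vert_sigma : forall x, vt (sg x) = vt x.
Hypothesis vert_sigma_orbit :
  forall x y, vt x = vt y -> exists k, (sg ^+ k)%g x = y.

Lemma vert_iter_sigma k x : vt (iter k sg x) = vt x.
Proof. by elim: k => //= k IHk; rewrite vert_sigma. Qed.

Lemma iter_sigma_inj k : injective (iter k sg).
Proof. by move=> x y; rewrite -!permX => /perm_inj. Qed.

Lemma iter_sigma_onto x y :
  vt x = vt y -> exists2 j, j < #|D| & iter j.+1 sg x = y.
Proof.
move=> /vert_sigma_orbit [k]; rewrite permX => <-.
have sg_inj : injective sg := @perm_inj _ sg.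
have le_ord : fingraph.order sg x <= #|D| := max_card _.
have ord_gt0 := fingraph.order_gt0 sg x.
have xy : fconnect sg x (iter k sg x) := fconnect_iter sg k x.
case: (findex sg x _) (findex_max xy) (iter_findex xy) => [|i] lt_i <-.
  by exists (fingraph.order sg x).-1; [lia | rewrite prednK // iter_order].
by exists i; first lia.
Qed.

Variable F : {set rE G}.
Local Notation inF x := (ed x \in F).

Definition incidentF (x : D) : bool := [exists y, (vt y == vt x) && inF y].

Lemma incidentF_self x : inF x -> incidentF x.
Proof. by move=> Fx; apply/existsP; exists x; rewrite eqxx. Qed.

Lemma incidentF_iter_sigma n x : incidentF (iter n sg x) = incidentF x.
Proof. by rewrite /incidentF vert_iter_sigma. Qed.

Lemma incidentF_iter x :
  incidentF x -> exists2 j, j < #|D| & inF (iter j.+1 sg x).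
Proof.
case/existsP => y /andP[/eqP yx Fy].
by have [j lt_j jy] := iter_sigma_onto _ _ (esym yx); exists j; rewrite ?jy.
Qed.

Variant nextF_spec (x : D) : D -> Prop :=
  | NextFIn k of k < #|D| & inF (iter k.+1 sg x)
      & (forall l, l < k -> ~~ inF (iter l.+1 sg x)) : nextF_spec x (iter k.+1 sg x)
  | NextFNone of (forall j, j < #|D| -> ~~ inF (iter j.+1 sg x)) : nextF_spec x x.

Lemma nextFP x : nextF_spec x (nextF G F x).
Proof.
rewrite /nextF; set s := [seq _ | i <- _].
have size_s : size s = #|D| by rewrite size_map size_iota.
have nth_s i : i < #|D| -> nth x s i = iter i.+1 sg x.
  by move=> lt_i; rewrite (nth_map 0) ?size_iota // nth_iota // permX.
have [has_F | hasN_F] := boolP (has (fun y => inF y) s).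
  have lt_find : find (fun y => inF y) s < #|D| by rewrite -size_s -has_find.
  rewrite nth_s //; apply: NextFIn => // [|l lt_l].
    by rewrite -nth_s //; apply: (nth_find x has_F).
  by rewrite -nth_s ?(ltn_trans lt_l) //; apply/negbT/(before_find x lt_l).
rewrite (hasNfind hasN_F) nth_default ?size_s //; apply: NextFNone => j lt_j.
by apply: contra hasN_F => Fj; apply/(has_nthP x); exists j; rewrite ?size_s ?nth_s.
Qed.

Lemma nextF_iter x k : k < #|D| -> inF (iter k.+1 sg x) ->
  (forall l, l < k -> ~~ inF (iter l.+1 sg x)) -> nextF G F x = iter k.+1 sg x.
Proof.
move=> lt_k Fk min_k; case: nextFP => [j _ Fj min_j | noF]; last first.
  by have := noF _ lt_k; rewrite Fk.
by case: (ltngtP j k) => [/min_k | /min_j | -> //]; rewrite ?Fj ?Fk.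
Qed.

Lemma vert_nextF x : vt (nextF G F x) = vt x.
Proof. by case: nextFP => // k *; apply: vert_iter_sigma. Qed.

Lemma inF_nextF x : inF (nextF G F x) = incidentF x.
Proof.
apply/idP/idP => [Fx | /incidentF_iter [j lt_j Fj]].
  by apply/existsP; exists (nextF G F x); rewrite vert_nextF eqxx.
by case: nextFP => // /(_ j lt_j); rewrite Fj.
Qed.

Lemma nextF_sigma x : inF (sg x) -> nextF G F x = sg x.
Proof.
move=> Fsx; apply: (@nextF_iter x 0) => //.
by apply/card_gt0P; exists x.
Qed.

Lemma nextF_sigma_notin x :
  ~~ inF (sg x) -> incidentF x -> nextF G F (sg x) = nextF G F x.
Proof.
move=> Fsx /incidentF_iter [j lt_j Fj].
case: (nextFP x) => [[|k] lt_k Fk min_k | /(_ j lt_j)]; last by rewrite Fj.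
  by rewrite Fk in Fsx.
rewrite iterSr; apply: nextF_iter => [||l lt_l]; rewrite -?iterSr //; first lia.
exact: min_k.
Qed.

Lemma nextF_inj : {in [pred x | inF x] &, injective (nextF G F)}.
Proof.
have nextF_min x : inF x -> exists k, nextF G F x = iter k.+1 sg x
    /\ forall l, l < k -> ~~ inF (iter l.+1 sg x).
  move=> Fx; have [j lt_j Fj] := incidentF_iter _ (incidentF_self _ Fx).
  by case: nextFP => [k _ _ min_k | /(_ j lt_j)]; [exists k | rewrite Fj].
move=> x1 x2; rewrite !inE => Fx1 Fx2; have [k1 [-> min1]] := nextF_min _ Fx1.
have [k2 [-> min2]] := nextF_min _ Fx2.
wlog le_k12 : x1 x2 k1 k2 Fx1 Fx2 min1 min2 / k1 <= k2.
  move=> wlog_le; case: (leqP k1 k2) => [|/ltnW] le_k; first exact: wlog_le.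
  by move/esym/(wlog_le x2 x1 k2 k1) => ->.
rewrite -(subnKC le_k12) -addSn iterD => /iter_sigma_inj.
case E : (k2 - k1) => [//|m] x1m.
have lt_m : m < k2 by lia.
by have := min2 m lt_m; rewrite -x1m Fx1.
Qed.

Definition swapF x := if inF x then al x else x.
Definition walkF x := swapF (sg x).
(* [faceF] is meaningless off the darts of F; extending it by the identity
   there makes it a permutation of all darts. *)
Definition faceF_ext x := if inF x then faceF G F x else x.
Definition toF x := if inF x then al x else nextF G F x.

Lemma swapFK : involutive swapF.
Proof.
by move=> x; rewrite /swapF; case Fx: (inF x); rewrite ?edge_alpha Fx ?alphaK.
Qed.

Lemma walkF_inj : injective walkF.
Proof. by move=> x y /(can_inj swapFK) /perm_inj. Qed.

Lemma inF_faceF_ext x : inF (faceF_ext x) = inF x.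
Proof.
rewrite /faceF_ext /faceF; case: ifP => // Fx.
by rewrite inF_nextF incidentF_self ?edge_alpha.
Qed.

Lemma faceF_ext_inj : injective faceF_ext.
Proof.
move=> x y xy; have Fxy : inF x = inF y by rewrite -inF_faceF_ext xy inF_faceF_ext.
move: xy; rewrite /faceF_ext /faceF -Fxy; case: ifP => // Fx /nextF_inj.
by rewrite !inE !edge_alpha -Fxy Fx => /(_ isT isT) /(can_inj alphaK).
Qed.

Lemma walkF_connect_nextF x : incidentF x -> fconnect walkF x (al (nextF G F x)).
Proof.
move=> /incidentF_iter [j lt_j Fj].
case: (nextFP x) => [k _ Fk min_k | /(_ j lt_j) /negP[] //].
have walk_iter i : i <= k -> iter i walkF x = iter i sg x.
  elim: i => [//|i IHi] lt_i /=; rewrite IHi ?(ltnW lt_i) // /walkF /swapF.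
  by rewrite -[sg (iter i sg x)]/(iter i.+1 sg x) (negbTE (min_k _ lt_i)).
suff -> : al (iter k.+1 sg x) = iter k.+1 walkF x by apply: fconnect_iter.
by rewrite /= walk_iter // /walkF /swapF -[sg (iter k sg x)]/(iter k.+1 sg x) Fk.
Qed.

Lemma inF_toF x : inF (toF x) = incidentF x.
Proof.
by rewrite /toF; case: ifP => Fx; rewrite ?inF_nextF // edge_alpha Fx incidentF_self.
Qed.

Lemma toF_walkF x :
  incidentF x -> toF (walkF x) = if inF x then faceF_ext (toF x) else toF x.
Proof.
move=> Ix; rewrite /toF /walkF /swapF /faceF_ext /faceF.
case Fx: (inF x); case Fsx: (inF (sg x)); rewrite ?edge_alpha ?Fx ?Fsx ?alphaK.
- by rewrite nextF_sigma.
- by rewrite nextF_sigma_notin ?Fsx.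
- by rewrite nextF_sigma.
- by rewrite nextF_sigma_notin ?Fsx.
Qed.

Lemma fclosed_faceF_ext : fclosed faceF_ext [set x | inF x].
Proof.
apply: (intro_closed (fconnect_sym faceF_ext_inj)) => x _ /eqP <-.
by rewrite !inE inF_faceF_ext.
Qed.

Lemma fcard_faceF_ext : fcard faceF_ext [set x | inF x] = fcard walkF incidentF.
Proof.
have sym_face : connect_sym (frel faceF_ext) := fconnect_sym faceF_ext_inj.
have sym_walk : connect_sym (frel walkF) := fconnect_sym walkF_inj.
have cl_F := fclosed_faceF_ext.
rewrite (adjunction_n_comp toF sym_face sym_walk cl_F); last first.
  apply: (@intro_adjunction _ _ toF _ _ sym_walk _ cl_F (fun x _ => al x)).
    move=> x; rewrite inE => Fx; split=> [|y _ /eqP <-].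
      by rewrite /toF edge_alpha Fx alphaK connect0.
    rewrite /faceF_ext Fx; apply: walkF_connect_nextF.
    by rewrite incidentF_self ?edge_alpha.
  move=> x; rewrite inE inF_toF => Ix; split=> [|y /eqP <-].
    rewrite /toF; case: ifP => _; last exact: walkF_connect_nextF.
    by rewrite alphaK connect0.
  by rewrite toF_walkF //; case: ifP => _; [apply: fconnect1 | apply: connect0].
by apply: eq_n_comp_r => x; rewrite !inE inF_toF.
Qed.

Definition bare_vertex : {pred V} :=
  [pred v | [exists x, vt x == v] && [forall x, (vt x == v) ==> ~~ inF x]].

Lemma bare_vertex_vert x : (vt x \in bare_vertex) = ~~ incidentF x.
Proof.
rewrite inE /incidentF negb_exists; apply/andP/forallP => [[_ /forallP noF] y | noF].
  by apply/negP => /andP[/eqP yx Fy]; have := noF y; rewrite yx eqxx Fy.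
split; first by apply/existsP; exists x.
by apply/forallP => y; apply/implyP => /eqP yx; have := noF y; rewrite yx eqxx.
Qed.

Lemma iter_walkF_notincident n x : ~~ incidentF x -> iter n walkF x = iter n sg x.
Proof.
move=> Ix; elim: n => //= n ->; rewrite /walkF /swapF ifN //.
apply: contra Ix => /incidentF_self.
by rewrite -[sg _]/(iter n.+1 sg x) incidentF_iter_sigma.
Qed.

Lemma fcard_walkF_notincident : fcard walkF [predC incidentF] = #|bare_vertex|.
Proof.
have sym_id : connect_sym (frel (@id V)) := fconnect_sym (@inj_id V).
have sym_walk : connect_sym (frel walkF) := fconnect_sym walkF_inj.
have cl_bare : closed (frel id) bare_vertex by apply: intro_closed => // u v /eqP <-.
have dart_of v : v \in bare_vertex -> exists x, vt x == v by case/andP => /existsP.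
rewrite -fcard_id (adjunction_n_comp vt sym_id sym_walk cl_bare); last first.
  apply: (@intro_adjunction _ _ vt _ _ sym_walk _ cl_bare
            (fun v bv => xchoose (dart_of v bv))).
    move=> v bv; split=> [|u bu /eqP vu].
      by rewrite (eqP (xchooseP (dart_of v bv))) connect0.
    by subst u; rewrite (bool_irrelevance bu bv) connect0.
  move=> x bx; have nIx : ~~ incidentF x by rewrite -bare_vertex_vert.
  split=> [|y /eqP <-].
    have [j _ <-] := iter_sigma_onto x _ (esym (eqP (xchooseP (dart_of _ bx)))).
    by rewrite -iter_walkF_notincident //; apply: fconnect_iter.
  by rewrite -[walkF x]/(iter 1 walkF x) iter_walkF_notincident //= vert_sigma connect0.
by apply: eq_n_comp_r => x; rewrite inE [in RHS]inE bare_vertex_vert.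
Qed.

Definition pairF (a : arm G) : arm G := (swapF a.1, ~~ a.2).
Definition resolvedF : rel (arm G) := fun a b => (b == med G a) || (b == pairF a).

Lemma medK : involutive (med G).
Proof. by case=> x [|]; rewrite /med /= ?permK ?permKV. Qed.

Lemma pairFK : involutive pairF.
Proof. by case=> x b; rewrite /pairF /= swapFK negbK. Qed.

Lemma resolvedF_sym : symmetric resolvedF.
Proof.
move=> a b; rewrite /resolvedF !(eq_sym b).
by rewrite (can2_eq medK medK) (can2_eq pairFK pairFK).
Qed.

Lemma n_comp_resolvedF : n_comp resolvedF predT = fcard walkF predT.
Proof.
have sym_res : connect_sym resolvedF := sym_connect_sym resolvedF_sym.
have sym_walk : connect_sym (frel walkF) := fconnect_sym walkF_inj.
have cl_T : closed resolvedF predT by [].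
have med_step x : resolvedF (x, true) (sg x, false) by rewrite /resolvedF /med /= eqxx.
rewrite (adjunction_n_comp (fun x => (x, true)) sym_res sym_walk cl_T) //.
apply: (@intro_adjunction _ _ _ _ _ sym_walk _ cl_T
          (fun a _ => if a.2 then a.1 else (sg^-1)%g a.1)).
  case=> x b _; split.
    by case: b; [apply: connect0 | apply: connect1; rewrite /resolvedF /med /= eqxx].
  case=> y c _; case: b => /orP[] /eqP -> /=.
  - by rewrite permK connect0.
  - by rewrite sym_walk; apply: connect1; rewrite /= /walkF permKV swapFK.
  - exact: connect0.
  - by apply: connect1; rewrite /= /walkF permKV.
move=> x _; split=> [|_ /eqP <-]; first exact: connect0.
apply: (connect_trans (connect1 (med_step x))).
by apply: connect1; rewrite /resolvedF /pairF /= eqxx orbT.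
Qed.

Lemma card_froot_faceF :
  #|[set froot (faceF G F) x | x in [set x | inF x]]| = fcard faceF_ext [set x | inF x].
Proof.
rewrite -(card_imset_root _ _ _ (fconnect_sym faceF_ext_inj) fclosed_faceF_ext).
congr #|pred_of_set _|; apply: eq_in_imset; apply: eq_froot_in => x; rewrite !inE => Fx.
  by rewrite /faceF_ext Fx.
by have := inF_faceF_ext x; rewrite /faceF_ext Fx => ->.
Qed.

Lemma card_noF_vertex :
  #|[set v | [forall x, (vt x == v) ==> ~~ inF x]]|
  = (#|bare_vertex| + #|[set v | [forall x, vt x != v]]|)%N.
Proof.
rewrite -(cardID [pred v | [exists x, vt x == v]]); congr (_ + _)%N.
  by apply: eq_card => v; rewrite !inE andbC.
apply: eq_card => v; rewrite !inE negb_exists.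
apply/andP/idP => [[] // | noV]; split=> //.
by apply/forallP => x; rewrite (negbTE (forallP noV x)).
Qed.

Lemma bc_resolvedF :
  (n_comp resolvedF predT + #|[set v | [forall x, vt x != v]]|)%N = bc G F.
Proof.
rewrite /bc card_froot_faceF card_noF_vertex fcard_faceF_ext -fcard_walkF_notincident.
by rewrite n_comp_resolvedF (n_compC incidentF) addnA.
Qed.

End Boundary.

Local Open Scope ring_scope.

Section MedialStates.
Variables (G : ribbon) (eps : rE G -> int).
Hypothesis eps_sign : forall e, eps e = 1 \/ eps e = -1.

Definition subgraph_of_state (S : {ffun rE G -> bool}) : {set rE G} :=
  [set e | S e == (eps e == 1)].

Definition state_of_subgraph (F : {set rE G}) : {ffun rE G -> bool} :=
  [ffun e => (e \in F) == (eps e == 1)].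

Lemma state_of_subgraphK : cancel state_of_subgraph subgraph_of_state.
Proof.
by move=> F; apply/setP => e; rewrite !inE ffunE; case: (e \in F); case: (eps e == 1).
Qed.

Lemma subgraph_of_stateK : cancel subgraph_of_state state_of_subgraph.
Proof.
by move=> S; apply/ffunP => e; rewrite !ffunE !inE; case: (S e); case: (eps e == 1).
Qed.

Lemma state_pairE (S : {ffun rE G -> bool}) (b : arm G) :
  involutive (alpha G) -> (forall x, alpha G x != x) ->
  state_pair G eps S b = pairF G (subgraph_of_state S) b.
Proof.
case: b => x t alphaK alpha_neq.
have neq_alpha c c' : ((alpha G x, c) == (x, c') :> arm G) = false.
  by apply/negbTE; apply: contra (alpha_neq x) => /eqP[->].
have neq_alpha' c c' : ((x, c) == (alpha G x, c') :> arm G) = false.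
  by rewrite eq_sym neq_alpha.
rewrite /state_pair /over_rep /signed_over /natural_over /black_after /pairF /swapF.
rewrite /subgraph_of_state inE /=.
case: (eps_sign (edge G x)) => -> /=; case: (S (edge G x)); case: t;
  by rewrite /join_regions /succ_arm /pred_arm /= ?eqxx ?neq_alpha ?neq_alpha'
             ?alphaK ?xpair_eqE ?eqxx.
Qed.

Lemma delta_subgraph_of_state (S : {ffun rE G -> bool}) :
  is_ribbon_graph G -> delta G eps S = bc G (subgraph_of_state S).
Proof.
case=> alphaK [alpha_neq [edge_alpha [_ [_ [vert_sigma vert_sigma_orbit]]]]].
rewrite /delta -bc_resolvedF //; congr (_ + _)%N.
by apply: eq_n_comp; apply: eq_connect => a b; rewrite /resolvedF state_pairE.
Qed.

Lemma card_A_splitting (F : {set rE G}) :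
  (#|[set e | state_of_subgraph F e]| + eminus G eps F
   = #|F| + eminus G eps (~: F))%N.
Proof.
have neg_pos e : (eps e == -1) = ~~ (eps e == 1) by case: (eps_sign e) => ->.
set A := [set e | state_of_subgraph F e]; set N := [set e | eps e == -1].
rewrite -(cardID F A) -(cardID N F).
have posF : #|[predI A & F]| = #|[predD F & N]|.
  apply: eq_card => e; rewrite !inE ffunE neg_pos.
  by case: (e \in F); case: (eps e == 1).
have negCF : #|[predD A & F]| = eminus G eps (~: F).
  apply: eq_card => e; rewrite !inE ffunE neg_pos.
  by case: (e \in F); case: (eps e == 1).
have negF : eminus G eps F = #|[predI F & N]|.
  by apply: eq_card => e; rewrite !inE.
lia.
Qed.

End MedialStates.

Lemma BR_monomialE {K : fieldType} {A B d xh yh : K} {p q r u X Y Z : int} :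
  A != 0 -> B != 0 -> d != 0 -> xh ^+ 2 = B * d / A -> xh * yh = d ->
  X = 2 * u + Y ->
  A ^ p * B ^ q * d ^ r * (xh ^ X * yh ^ Y * d^-1 ^ Z) =
  A ^ (p - u) * B ^ (q + u) * d ^ (r + u + Y - Z).
Proof.
move=> A0 B0 d0 xh2 xhyh ->.
have xh0 : xh != 0.
  by apply: contra_eq_neq xh2 => ->; rewrite expr0n /= eq_sym !mulf_neq0 ?invr_eq0.
have -> : xh ^ (2 * u + Y) * yh ^ Y = (B * d / A) ^ u * d ^ Y.
  by rewrite expfzDr // -mulrA -expfzMl xhyh -exprz_exp -exprnP xh2.
rewrite !expfzMl !exprz_inv !expfzDr ?invr_eq0 //; ring.
Qed.

Theorem theorem4p1 (K : fieldType) (G : ribbon) (HG : is_ribbon_graph G)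
    (eps : rE G -> int) (Heps : forall e, eps e = 1 \/ eps e = -1)
    (A B d xh yh : K) (HA : A != 0) (HB : B != 0) (Hd : d != 0)
    (Hxh : xh ^+ 2 = B * d / A) (Hxy : xh * yh = d) :
  kbracket G eps K A B d =
    A ^ rk G setT * B ^ nul G setT * d ^ ((kc G setT)%:Z - 1)
    * BR_half G eps K xh yh d^-1.
Proof.
rewrite /kbracket /BR_half mulr_sumr (reindex (state_of_subgraph G eps)); last first.
  by apply: onW_bij; exists (subgraph_of_state G eps);
    [apply: state_of_subgraphK | apply: subgraph_of_stateK].
apply: eq_bigr => F _; rewrite delta_subgraph_of_state // state_of_subgraphK.
set u := rk G setT - rk G F - nul G F + twice_s G eps F.
have X_eq : 2 * (rk G setT - rk G F) + twice_s G eps F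
            = 2 * u + (2 * nul G F - twice_s G eps F) by rewrite /u; lia.
rewrite (BR_monomialE HA HB Hd Hxh Hxy X_eq).
have card_A := card_A_splitting G eps Heps F.
set S := state_of_subgraph G eps F in card_A *.
have card_B : (#|[set e | ~~ S e]| + #|[set e | S e]| = #|rE G|)%N.
  rewrite addnC -(cardsC [set e | S e]); congr (_ + _)%N.
  by apply: eq_card => e; rewrite !inE.
rewrite !exprnP; congr (_ ^ _ * _ ^ _ * _ ^ _);
  by rewrite /u /nul /rk /twice_s ?cardsT; lia.
Qed.
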